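(* Let $\varphi$ be a multiplication of an infinite abelian group $A$. Then: (R) $\varphi$ is inertial if and only if either $A$ has finite torsion-free rank or $\varphi$ is multiplication by an integer; (L1) if $A$ is a $p$-group, then $\varphi$ is left-inertial if and only if either $\varphi$ is invertible, or $A$ satisfies the minimal condition and $\varphi\neq0$; (L2) if $0<r_0(A)<\infty$ and $\varphi$ is multiplication by $\frac{m}{n}$ with $m,n$ coprime integers, then $\varphi$ is left-inertial if and only if $A_{\pi(m)}$ satisfies the minimal condition and $\varphi\ne0$; (L3) if $r_0(A)=\infty$, then $\varphi$ is left-inertial if and only if $\varphi$ is multiplication by $\frac1n$ for some nonzero integer $n$.
   Context: Abelian groups are written additively. An endomorphism $\varphi$ of $A$ is inertial if $(\varphi(X)+X)/X$ is finite for every subgroup $X\le A$, and left-inertial if $X/(X\cap\varphi(X))$ is finite for every $X\le A$. Multiplications: if $A$ is periodic, a multiplication is the componentwise action of an element $(\alpha_p)_p\in\prod_p\mathbb{Z}_p$ of $p$-adic integers on the $p$-components; if $A$ is not periodic, a multiplication is multiplication by a rational $\frac mn$ ($m,n$ coprime), defined when $A$ is $\pi(n)$-divisible with $A_{\pi(n)}=0$ by $\varphi(nx)=mx$. $r_0(A)$ is the torsion-free rank; $\pi(m)$ is the set of prime divisors of $m$; $A_{\pi}$ is the $\pi$-component of $A$. An abelian group satisfies the minimal condition (Min) iff it is $F\oplus D$ with $F$ finite and $D$ a direct sum of finitely many Prüfer groups. *)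

From mathcomp Require Import all_boot all_order all_algebra.
Set Implicit Arguments. Unset Strict Implicit. Unset Printing Implicit Defensive.
Import Order.TTheory GRing.Theory Num.Theory.
Local Open Scope ring_scope.

Section Defs.
Variable A : zmodType.

Definition subgroup (X : A -> Prop) : Prop :=
  X 0 /\ (forall x y, X x -> X y -> X (x - y)).

Definition imageg (phi : A -> A) (X : A -> Prop) : A -> Prop :=
  fun y => exists x, X x /\ y = phi x.
Definition sumg (X Y : A -> Prop) : A -> Prop :=
  fun z => exists x y, X x /\ Y y /\ z = x + y.
Definition capg (X Y : A -> Prop) : A -> Prop := fun z => X z /\ Y z.

(* For subgroups X <= Y: the quotient Y/X is finite, i.e. Y is covered by
   finitely many cosets z + X with z in Y. *)
Definition fin_quot (Y X : A -> Prop) : Prop :=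
  exists s : seq A, (forall z, z \in s -> Y z) /\
    (forall y, Y y -> exists2 z, z \in s & X (y - z)).

Definition inertial (phi : A -> A) : Prop :=
  forall X, subgroup X -> fin_quot (sumg (imageg phi X) X) X.

Definition left_inertial (phi : A -> A) : Prop :=
  forall X, subgroup X -> fin_quot X (capg X (imageg phi X)).

Definition infinite_group : Prop := ~ (exists s : seq A, forall x : A, x \in s).

Definition periodic : Prop := forall x : A, exists2 k : nat, (0 < k)%N & x *+ k = 0.

Definition p_group (p : nat) : Prop := forall x : A, exists k : nat, x *+ (p ^ k) = 0.

Definition lin_indep (s : seq A) : Prop :=
  forall c : seq int, size c = size s ->
    \sum_(i < size s) (s`_i *~ c`_i) = 0 -> forall i, c`_i = 0.

Definition finite_tf_rank : Prop :=
  exists n : nat, forall s : seq A, lin_indep s -> (size s <= n)%N.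

Definition infinite_tf_rank : Prop :=
  forall n : nat, exists s : seq A, lin_indep s /\ size s = n.

Definition pi_component (m : int) : A -> Prop :=
  fun x => exists k : nat, [/\ (0 < k)%N,
    (forall p, prime p -> (p %| k)%N -> (p %| absz m)%N) & x *+ k = 0].

Definition min_cond (S : A -> Prop) : Prop :=
  forall X : nat -> A -> Prop,
    (forall i, subgroup (X i)) ->
    (forall i, forall x, X i x -> S x) ->
    (forall i, forall x, X i.+1 x -> X i x) ->
    exists N, forall i, (N <= i)%N -> forall x, X i x <-> X N x.

Definition endo (phi : A -> A) : Prop := forall x y, phi (x + y) = phi x + phi y.

(* multiplication by an element (alpha_p)_p of prod_p Z_p on a periodic group:
   alpha p k is the residue of alpha_p modulo p^k (compatible system),
   and alpha_p acts on the p-component; an element killed by p^k is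
   multiplied by alpha_p mod p^k. *)
Definition padic_mult (phi : A -> A) : Prop :=
  endo phi /\ exists alpha : nat -> nat -> int,
    (forall p k, prime p -> (alpha p k.+1 = alpha p k %[mod (p ^ k)%:Z])%Z) /\
    (forall p k x, prime p -> x *+ (p ^ k) = 0 -> phi x = x *~ alpha p k).

(* multiplication by the rational m/n, m n coprime: requires A to be
   pi(n)-divisible with A_{pi(n)} = 0, and phi (n x) = m x *)
Definition rat_mult (m n : int) (phi : A -> A) : Prop :=
  [/\ n != 0, coprimez m n,
      (forall p, prime p -> (p %| absz n)%N -> forall x : A, exists y, y *+ p = x),
      (forall x, pi_component n x -> x = 0) &
      forall x, phi (x *~ n) = x *~ m].

Definition multiplication (phi : A -> A) : Prop :=
  endo phi /\
  (periodic -> padic_mult phi) /\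
  (~ periodic -> exists m n : int, rat_mult m n phi).

Definition int_mult (phi : A -> A) : Prop := exists z : int, forall x, phi x = x *~ z.

Definition nonzero_map (phi : A -> A) : Prop := exists x, phi x != 0.

End Defs.

(* If [phi] is multiplication by [m/n] and [r_0(A)] is finite, then [X / |n| X] is finite
   for every subgroup [X] (finite rank, and no [pi(n)]-torsion), so [phi X + X] is finite
   over [X].  If [r_0(A)] is infinite, let [X] be the span of an infinite independent family
   [x_i]: by the pigeonhole principle inertiality puts some [phi (x_i - x_j)] into [X], and
   left-inertiality puts some [x_i - x_j] into [phi X]; independence then forces [n | m],
   resp. [m | n].
   On a [p]-group a multiplication is bijective when [p] does not divide [alpha_p];
   otherwise it maps [X] into [pX], and onto [p^v X] for some [v] when it is nonzero, so
   left-inertiality amounts to the finiteness of every [X / pX].  For a [p]-primary group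
   this is equivalent to the minimal condition: a descending chain first stabilises on its
   divisible parts [p^w X_i], which are controlled by the finite socle, and then modulo
   them.  Part (L2) runs the same argument inside [A_pi(m)], the [p]-pure part of [X / pX]
   being handled by finite rank. *)
From mathcomp Require Import all_boot all_order all_algebra.
From Stdlib Require Import ClassicalEpsilon Classical.
Set Implicit Arguments. Unset Strict Implicit. Unset Printing Implicit Defensive.
Import Order.TTheory GRing.Theory Num.Theory.
Local Open Scope ring_scope.

Section Subgroups.
Variable A : zmodType.
Implicit Types (X Y Z : A -> Prop) (x y : A).

Lemma subgroup0 X : subgroup X -> X 0.
Proof. by case. Qed.

Lemma subgroupB X x y : subgroup X -> X x -> X y -> X (x - y).
Proof. by case=> _; apply. Qed.

Lemma subgroupN X x : subgroup X -> X x -> X (- x).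
Proof. by move=> sX Xx; rewrite -sub0r; apply: subgroupB (subgroup0 sX) Xx. Qed.

Lemma subgroupD X x y : subgroup X -> X x -> X y -> X (x + y).
Proof. by move=> sX Xx Xy; rewrite -[y]opprK; apply: subgroupB Xx (subgroupN sX Xy). Qed.

Lemma subgroupMn X x k : subgroup X -> X x -> X (x *+ k).
Proof.
move=> sX Xx; elim: k => [|k IHk]; first by rewrite mulr0n; apply: subgroup0.
by rewrite mulrS; apply: subgroupD.
Qed.

Lemma subgroupMz X x z : subgroup X -> X x -> X (x *~ z).
Proof.
move=> sX Xx; case: z => k; first exact: subgroupMn.
by rewrite NegzE mulrNz; apply: subgroupN => //; apply: subgroupMn.
Qed.

Lemma subgroup_sum X (I : Type) (r : seq I) (P : pred I) (F : I -> A) :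
  subgroup X -> (forall i, P i -> X (F i)) -> X (\sum_(i <- r | P i) F i).
Proof.
move=> sX XF; elim: r => [|i r IHr]; first by rewrite big_nil; apply: subgroup0.
by rewrite big_cons; case: ifP => // Pi; apply: subgroupD => //; apply: XF.
Qed.

Lemma subgroupT : subgroup (fun _ : A => True).
Proof. by []. Qed.

Lemma subgroup_trivial : subgroup (fun x : A => x = 0).
Proof. by split=> // x y -> ->; rewrite subr0. Qed.

Lemma subgroup_sumg X Y : subgroup X -> subgroup Y -> subgroup (sumg X Y).
Proof.
move=> sX sY; split; first by exists 0, 0; rewrite addr0; do !split; apply: subgroup0.
move=> _ _ [x1 [y1 [Xx1 [Yy1 ->]]]] [x2 [y2 [Xx2 [Yy2 ->]]]].
exists (x1 - x2), (y1 - y2); rewrite opprD addrACA.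
by do !split; apply: subgroupB.
Qed.

Lemma subgroup_capg X Y : subgroup X -> subgroup Y -> subgroup (capg X Y).
Proof.
by move=> sX sY; split=> [|x y [? ?] [? ?]]; split; apply: subgroup0 || apply: subgroupB.
Qed.

Definition mulng (q : nat) X : A -> Prop := fun y => exists x, X x /\ y = x *+ q.

Lemma subgroup_mulng q X : subgroup X -> subgroup (mulng q X).
Proof.
move=> sX; split; first by exists 0; rewrite mul0rn; split; first apply: subgroup0.
move=> _ _ [x [Xx ->]] [y [Xy ->]]; exists (x - y).
by rewrite mulrnBl; split; first apply: subgroupB.
Qed.

Lemma mulng_subset q X : subgroup X -> forall y, mulng q X y -> X y.
Proof. by move=> sX _ [x [Xx ->]]; apply: subgroupMn. Qed.

Lemma mulngM a b X y : mulng a (mulng b X) y <-> mulng (b * a) X y.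
Proof.
split=> [[_ [[x [Xx ->]] ->]]|[x [Xx ->]]]; first by exists x; rewrite mulrnA.
by exists (x *+ b); split; [exists x|rewrite mulrnA].
Qed.

Lemma mulng1 X y : mulng 1 X y <-> X y.
Proof. by split=> [[x [Xx ->]]|Xy]; last exists y. Qed.

Lemma mulng_mulz X (p : nat) x (z : int) : subgroup X -> X x -> mulng p X (x *~ (z * p%:Z)).
Proof.
by move=> sX Xx; exists (x *~ z); rewrite mulrzA -pmulrn; split; first apply: subgroupMz.
Qed.

Lemma mulrn_absz x (n : int) : x *+ `|n| = x *~ n \/ x *+ `|n| = - (x *~ n).
Proof. by case: n => k; [left|right]; rewrite ?NegzE ?mulrNz ?opprK pmulrn. Qed.

Lemma subgroupMz_absz X x (n : int) : subgroup X -> X (x *~ n) <-> X (x *+ `|n|).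
Proof.
move=> sX; case: (mulrn_absz x n) => ->; split=> // Xx; first exact: subgroupN.
by rewrite -[_ *~ n]opprK; apply: subgroupN.
Qed.

Lemma mulng_absz X y (m : int) : subgroup X -> X y -> mulng `|m| X (y *~ m).
Proof.
move=> sX Xy; case: (mulrn_absz y m) => E; first by exists y.
by exists (- y); rewrite mulNrn E opprK; split; first apply: subgroupN.
Qed.

Lemma fin_quot_subset Y X : Y 0 -> (forall y, Y y -> X y) -> fin_quot Y X.
Proof.
move=> Y0 YX; exists [:: 0]; split=> [z|y Yy]; first by rewrite inE => /eqP ->.
by exists 0; rewrite ?inE // subr0; apply: YX.
Qed.

Lemma fin_quot_mono Y X X' : (forall x, X x -> X' x) -> fin_quot Y X -> fin_quot Y X'.
Proof. by move=> XX' [s [sY Ycov]]; exists s; split=> // y /Ycov [z zs /XX']; exists z. Qed.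

Lemma fin_quot_trans Y Z X : subgroup Y -> (forall z, Z z -> Y z) ->
  fin_quot Y Z -> fin_quot Z X -> fin_quot Y X.
Proof.
move=> sY ZY [s1 [s1Y Ycov]] [s2 [s2Z Zcov]].
exists [seq a + b | a <- s1, b <- s2]; split.
  move=> _ /allpairsP [[a b] /= [a_s1 b_s2 ->]].
  by apply: subgroupD => //; [apply: s1Y|apply/ZY/s2Z].
move=> y /Ycov [a a_s1 /Zcov [b b_s2 Xb]]; exists (a + b); first exact: allpairs_f.
by rewrite opprD addrA.
Qed.

End Subgroups.

Section Endomorphisms.
Variables (A : zmodType) (phi : A -> A).
Hypothesis phi_endo : endo phi.

Lemma endo0 : phi 0 = 0.
Proof. by apply: (@addrI _ (phi 0)); rewrite -phi_endo !addr0. Qed.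

Lemma endoN x : phi (- x) = - phi x.
Proof. by apply/eqP; rewrite -subr_eq0 opprK -phi_endo addNr endo0. Qed.

Lemma endoB x y : phi (x - y) = phi x - phi y.
Proof. by rewrite phi_endo endoN. Qed.

Lemma endoMn x k : phi (x *+ k) = phi x *+ k.
Proof. by elim: k => [|k IHk]; rewrite ?mulr0n ?endo0 // !mulrS phi_endo IHk. Qed.

Lemma endoMz x z : phi (x *~ z) = phi x *~ z.
Proof. by case: z => k; rewrite ?NegzE ?mulrNz ?endoN endoMn. Qed.

Lemma subgroup_imageg X : subgroup X -> subgroup (imageg phi X).
Proof.
move=> sX; split; first by exists 0; rewrite endo0; split; first apply: subgroup0.
move=> _ _ [x [Xx ->]] [y [Xy ->]]; exists (x - y).
by rewrite endoB; split; first apply: subgroupB.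
Qed.

End Endomorphisms.

Lemma choice_mkseq (T : Type) (R : seq T -> T -> Prop) :
  (forall t, exists y, R t y) -> exists x : nat -> T, forall M, R (mkseq x M) (x M).
Proof.
move=> /ClassicalEpsilon.choice [next Rnext].
pose fix prefix n := if n is n'.+1 then rcons (prefix n') (next (prefix n')) else [::].
exists (fun i => next (prefix i)) => M.
suff -> : mkseq (fun i => next (prefix i)) M = prefix M by [].
by elim: M => [//|M IHM]; rewrite mkseqS IHM.
Qed.

Lemma big_delta_seq (A : zmodType) (r : seq nat) j0 (F : nat -> A) :
  uniq r -> j0 \in r -> \sum_(j <- r) (if j == j0 then F j else 0) = F j0.
Proof.
move=> r_uniq j0r; rewrite (big_rem j0 j0r) /= eqxx big1_seq ?addr0 //.
by move=> j /andP [_]; rewrite (mem_rem_uniq _ r_uniq) => /andP [/negbTE -> _].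
Qed.

Section LinearCombinations.
Variable A : zmodType.
Implicit Types (s t : seq A) (f g : nat -> int) (X : A -> Prop).

Definition lincomb s f : A := \sum_(0 <= i < size s) s`_i *~ f i.

Lemma lincomb_nil f : lincomb [::] f = 0.
Proof. by rewrite /lincomb big_geq. Qed.

Lemma lincomb_cons x s f : lincomb (x :: s) f = x *~ f 0%N + lincomb s (fun k => f k.+1).
Proof. by rewrite /lincomb /= big_nat_recl. Qed.

Lemma lincomb_rcons x s f : lincomb (rcons s x) f = lincomb s f + x *~ f (size s).
Proof.
rewrite /lincomb size_rcons big_nat_recr //= nth_rcons ltnn eqxx; congr (_ + _).
by apply: eq_big_nat => i /andP [_ ltis]; rewrite nth_rcons ltis.
Qed.

Lemma eq_lincomb s f g : (forall i, (i < size s)%N -> f i = g i) -> lincomb s f = lincomb s g.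
Proof. by move=> fg; apply: eq_big_nat => i /andP [_ ltis]; rewrite fg. Qed.

Lemma lincomb0 s : lincomb s (fun _ => 0) = 0.
Proof. by rewrite /lincomb big1. Qed.

Lemma lincombB s f g : lincomb s (fun k => f k - g k) = lincomb s f - lincomb s g.
Proof. by rewrite /lincomb -sumrB; apply: eq_big_nat => i _; apply: mulrzBr. Qed.

Lemma lincombN s f : lincomb s (fun k => - f k) = - lincomb s f.
Proof. by rewrite -[RHS]sub0r -(lincomb0 s) -lincombB; apply: eq_lincomb => i _; rewrite sub0r. Qed.

Lemma lincombZ s f a : lincomb s (fun k => f k * a) = lincomb s f *~ a.
Proof. by rewrite /lincomb mulrz_suml; apply: eq_big_nat => i _; apply: mulrzA. Qed.

Lemma lincomb_delta s i a : (i < size s)%N ->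
  lincomb s (fun k => if k == i then a else 0) = s`_i *~ a.
Proof.
move=> ltis; rewrite /lincomb (eq_bigr (fun k => if k == i then s`_k *~ a else 0)).
  by rewrite big_delta_seq ?iota_uniq // mem_index_iota.
by move=> k _; case: eqP.
Qed.

Lemma subgroup_lincomb X s f : subgroup X ->
  (forall i, (i < size s)%N -> X s`_i) -> X (lincomb s f).
Proof.
move=> sX Xs; rewrite /lincomb big_seq_cond; apply: subgroup_sum => // i.
by rewrite mem_index_iota andbT => /andP [_ ltis]; apply: subgroupMz => //; apply: Xs.
Qed.

Lemma lin_indepP s :
  lin_indep s <-> forall f, lincomb s f = 0 -> forall i, (i < size s)%N -> f i = 0.
Proof.
split=> [Is f f0 i ltis|Is c size_c].
  have := Is (mkseq f (size s)); rewrite size_mkseq => /(_ erefl).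
  have -> : \sum_(i < size s) s`_i *~ (mkseq f (size s))`_i = lincomb s f.
    by rewrite /lincomb big_mkord; apply: eq_bigr => k _; rewrite nth_mkseq.
  by move=> /(_ f0 i); rewrite nth_mkseq.
move=> c0 i; have {}c0 : lincomb s (nth 0 c) = 0 by rewrite /lincomb big_mkord.
case: (ltnP i (size s)) => ltis; first exact: Is c0 i ltis.
by rewrite nth_default // size_c.
Qed.

Lemma lin_indep_nil : lin_indep ([::] : seq A).
Proof. by apply/lin_indepP. Qed.

Lemma lin_dep_relation s : ~ lin_indep s ->
  exists f, lincomb s f = 0 /\ exists2 j, (j < size s)%N & f j != 0.
Proof.
move=> Ds; apply: NNPP => Nrel; apply/Ds/lin_indepP => f f0 i ltis.
by apply: NNPP => fi; apply: Nrel; exists f; split=> //; exists i => //; apply/eqP.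
Qed.

Lemma relation_eliminate (r : seq nat) j0 (y : nat -> A) (b d e : nat -> int) :
  uniq r -> j0 \in r -> (forall j, j \in rem j0 r -> b j != 0) ->
  \sum_(j <- rem j0 r) (y j *~ b j - y j0 *~ d j) *~ e j = 0 ->
  (exists2 j, j \in rem j0 r & e j != 0) ->
  exists2 f, \sum_(j <- r) y j *~ f j = 0 & exists2 j, j \in r & f j != 0.
Proof.
move=> r_uniq j0r b_neq0 rel [j1 j1r e1_neq0].
pose S := \sum_(k <- rem j0 r) d k * e k.
exists (fun j => if j == j0 then - S else b j * e j).
  rewrite (big_rem j0 j0r) /= eqxx.
  rewrite (eq_big_seq (fun j => (y j *~ b j - y j0 *~ d j) *~ e j + y j0 *~ (d j * e j))).
    by rewrite big_split /= rel add0r -mulrz_sumr mulrNz addNr.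
  move=> j; rewrite (mem_rem_uniq _ r_uniq) => /andP [/negbTE -> _].
  by rewrite mulrzDl mulNrz -!mulrzA subrK.
have := j1r; rewrite (mem_rem_uniq _ r_uniq) => /andP [/negbTE j1_neq_j0 j1r'].
by exists j1; rewrite // j1_neq_j0 mulf_neq0 ?b_neq0.
Qed.

Lemma steinitz_dependent t (r : seq nat) (y : nat -> A) (c : nat -> int)
    (g : nat -> nat -> int) :
  uniq r -> (size t < size r)%N ->
  (forall j, j \in r -> c j != 0 /\ y j *~ c j = lincomb t (g j)) ->
  exists2 f, \sum_(j <- r) y j *~ f j = 0 & exists2 j, j \in r & f j != 0.
Proof.
elim: t r y c g => [|x t IHt] r y c g r_uniq size_r yt.
  case: r r_uniq size_r yt => [//|j0 r] r_uniq _ yt.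
  have [c0_neq0 yc0] := yt j0 (mem_head _ _).
  exists (fun j => if j == j0 then c j else 0); last by exists j0; rewrite ?mem_head ?eqxx.
  rewrite (eq_bigr (fun j => if j == j0 then y j *~ c j else 0)); last by move=> j _; case: eqP.
  by rewrite big_delta_seq ?mem_head // yc0 lincomb_nil.
pose a j := g j 0%N; pose g' j k := g j k.+1.
have yt' j : j \in r -> c j != 0 /\ y j *~ c j = x *~ a j + lincomb t (g' j).
  by move=> /yt [c_neq0 ->]; rewrite lincomb_cons.
case: (classic (forall j, j \in r -> a j = 0)) => [a0|Nall].
  apply: (IHt r y c g') => // [|j jr]; first exact: ltn_trans size_r.
  by have [c_neq0 ->] := yt' j jr; rewrite a0 // mulr0z add0r.
have [j0 Nj0] := not_all_ex_not _ _ Nall.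
have [j0r /eqP a_j0_neq0] := imply_to_and _ _ Nj0.
pose z j := y j *~ (c j * a j0) - y j0 *~ (c j0 * a j).
have [e rel e_nontriv] : exists2 e, \sum_(j <- rem j0 r) z j *~ e j = 0 &
    exists2 j, j \in rem j0 r & e j != 0.
  apply: (IHt _ z (fun _ => 1) (fun j k => g' j k * a j0 - g' j0 k * a j)).
  - exact: rem_uniq.
  - by rewrite size_rem //; case: (size r) size_r.
  move=> j /mem_rem jr; split=> //.
  rewrite mulr1z lincombB !lincombZ /z !mulrzA.
  have [_ ->] := yt' j jr; have [_ ->] := yt' j0 j0r.
  by rewrite !mulrzDl mulrzAC opprD addrACA subrr add0r.
apply: (relation_eliminate (b := fun j => c j * a j0) (d := fun j => c j0 * a j)) rel _ => //.
by move=> j /mem_rem /yt' [c_neq0 _]; rewrite mulf_neq0.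
Qed.

Lemma lin_indep_extend t : lin_indep t ->
  (exists s, lin_indep s /\ (size t < size s)%N) -> exists y, lin_indep (rcons t y).
Proof.
move=> It [s [Is size_s]]; apply: NNPP => Next.
have torsion j : exists cg : int * (nat -> int), cg.1 != 0 /\ s`_j *~ cg.1 = lincomb t cg.2.
  apply: NNPP => Ntors; apply: Next; exists s`_j; apply/lin_indepP => f.
  rewrite lincomb_rcons => rel i; rewrite size_rcons ltnS leq_eqVlt.
  have fs0 : f (size t) = 0.
    apply: NNPP => /eqP fs_neq0; apply: Ntors; exists (f (size t), fun k => - f k).
    by split=> //=; rewrite lincombN; apply/eqP; rewrite -addr_eq0 addrC rel.
  move: rel; rewrite fs0 mulr0z addr0 => rel; case/orP=> [/eqP -> //|ltit].
  by move/lin_indepP: It; apply.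
have [cg tors] := ClassicalEpsilon.choice _ torsion.
have size_iota_s : (size t < size (iota 0 (size s)))%N by rewrite size_iota.
have [f rel [j jr fj_neq0]] := steinitz_dependent (y := nth 0 s) (c := fun j => (cg j).1)
  (g := fun j => (cg j).2) (iota_uniq _ _) size_iota_s (fun j _ => tors j).
have rel' : lincomb s f = 0 by rewrite /lincomb /index_iota subn0.
move: jr; rewrite mem_iota add0n => /= jr.
by move/lin_indepP: Is => /(_ f rel' j jr) fj0; rewrite fj0 eqxx in fj_neq0.
Qed.

Lemma infinite_lin_indep_fun : ~ finite_tf_rank A ->
  exists x : nat -> A, forall M, lin_indep (mkseq x M).
Proof.
move=> Nfin.
have [x indep_step] : exists x : nat -> A, forall M,
    lin_indep (mkseq x M) -> lin_indep (rcons (mkseq x M) (x M)).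
  apply: (choice_mkseq (R := fun t y => lin_indep t -> lin_indep (rcons t y))) => t.
  case: (classic (lin_indep t)) => It; last by exists 0.
  suff [y Iy] : exists y, lin_indep (rcons t y) by exists y.
  apply: (lin_indep_extend It); apply: NNPP => Nlong; apply: Nfin; exists (size t) => s Is.
  by rewrite leqNgt; apply/negP => long; apply: Nlong; exists s.
by exists x; elim=> [|M IHM]; [apply: lin_indep_nil|rewrite mkseqS; apply: indep_step].
Qed.

Definition zspan_inf (x : nat -> A) : A -> Prop :=
  fun y => exists M g, y = lincomb (mkseq x M) g.

Lemma lincomb_mkseq_widen (x : nat -> A) M N g : (M <= N)%N ->
  lincomb (mkseq x M) g = lincomb (mkseq x N) (fun k => if (k < M)%N then g k else 0).
Proof.
move=> leMN; rewrite /lincomb !size_mkseq (@big_cat_nat _ _ _ M 0 N) //=.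
rewrite [X in _ + X]big1_seq ?addr0; last first.
  by move=> k /andP [_]; rewrite mem_index_iota => /andP [leMk _]; rewrite ltnNge leMk mulr0z.
apply: eq_big_nat => k /andP [_ ltkM]; rewrite ltkM !nth_mkseq //.
exact: leq_trans ltkM leMN.
Qed.

Lemma subgroup_zspan_inf (x : nat -> A) : subgroup (zspan_inf x).
Proof.
split; first by exists 0%N, (fun _ => 0); rewrite lincomb0.
move=> _ _ [M1 [g1 ->]] [M2 [g2 ->]].
exists (maxn M1 M2), (fun k => (if (k < M1)%N then g1 k else 0) - (if (k < M2)%N then g2 k else 0)).
by rewrite lincombB -!lincomb_mkseq_widen // ?leq_maxl ?leq_maxr.
Qed.

Lemma zspan_inf_mem (x : nat -> A) i : zspan_inf x (x i).
Proof.
exists i.+1, (fun k => if k == i then 1 else 0).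
by rewrite lincomb_delta ?size_mkseq // nth_mkseq.
Qed.

Lemma lin_indep_fun_dvd (x : nat -> A) i j y (a b : int) :
  (forall M, lin_indep (mkseq x M)) -> i != j -> zspan_inf x y ->
  (x i - x j) *~ a = y *~ b -> (b %| a)%Z.
Proof.
move=> Ix neq_ij [M [g ->]]; set N := maxn M (maxn i j).+1.
have [leMN ltiN ltjN] : [/\ (M <= N)%N, (i < N)%N & (j < N)%N].
  by split; rewrite leq_max ?leqnn // ltnS ?leq_maxl ?leq_maxr orbT.
rewrite (lincomb_mkseq_widen _ _ leMN) => rel.
pose g' k := if (k < M)%N then g k else 0.
pose h k := (if k == i then a else 0) - (if k == j then a else 0) - g' k * b.
have h0 : lincomb (mkseq x N) h = 0.
  rewrite /h !lincombB lincombZ !lincomb_delta ?size_mkseq // !nth_mkseq //.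
  by rewrite -mulrzBl rel subrr.
move/lin_indepP: (Ix N) => /(_ h h0 i); rewrite size_mkseq => /(_ ltiN).
rewrite /h eqxx (negbTE neq_ij) subr0 => /eqP; rewrite subr_eq0 => /eqP ->.
exact: dvdz_mull.
Qed.

Lemma fin_quot_pigeonhole (Y W : A -> Prop) (w : nat -> A) : subgroup W ->
  fin_quot Y W -> (forall i, Y (w i)) -> exists i j, i != j /\ W (w i - w j).
Proof.
move=> sW [s [_ cover]] Yw; set L := size s.
have near_s (i : 'I_L.+1) : exists k : 'I_L, W (w i - s`_k).
  have [z zs Wz] := cover _ (Yw i).
  have ltzL : (index z s < L)%N by rewrite index_mem.
  by exists (Ordinal ltzL); rewrite /= nth_index.
have [F WF] := ClassicalEpsilon.choice _ near_s.
have [F_inj|F_ninj] := classic (injective F).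
  by have := leq_card F F_inj; rewrite !card_ord ltnn.
have [i1 /(not_all_ex_not _ _) [i2 Ni12]] := not_all_ex_not _ _ F_ninj.
have [F12 neq12] := imply_to_and _ _ Ni12.
exists (val i1), (val i2); split; first by apply/eqP => /val_inj.
have -> : w i1 - w i2 = (w i1 - s`_(F i1)) - (w i2 - s`_(F i2)).
  by rewrite F12 opprB addrA subrK.
exact: subgroupB.
Qed.

End LinearCombinations.

Lemma ex_max_bounded (P : nat -> Prop) r : P 0%N -> (forall k, P k -> (k <= r)%N) ->
  exists2 k, P k & forall k', P k' -> (k' <= k)%N.
Proof.
move=> P0 bounded.
suff max_above d m : P m -> (forall k, P k -> (k <= m + d)%N) ->
    exists2 k, P k & forall k', P k' -> (k' <= k)%N by apply: (max_above r 0%N).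
elim: d m => [|d IHd] m Pm le_md; first by exists m => // k /le_md; rewrite addn0.
have [[k Pk ltmk]|Nabove] := classic (exists2 k, P k & (m < k)%N).
  apply: (IHd k Pk) => k' /le_md /leq_trans; apply.
  by rewrite addnS -addSn leq_add2r.
exists m => // k Pk; rewrite leqNgt; apply/negP => ltmk; apply: Nabove; by exists k.
Qed.

Section FiniteRank.
Variables (A : zmodType) (p : nat).
Hypothesis p_prime : prime p.
Implicit Types (X W T : A -> Prop) (t : seq A).

Lemma fin_cover_lincomb X t : subgroup X -> (forall i, (i < size t)%N -> X t`_i) ->
  exists s : seq A, (forall z, z \in s -> X z) /\
    forall g, exists2 z, z \in s & mulng p X (lincomb t g - z).
Proof.
move=> sX; elim: t => [|y t IHt] Xt.
  exists [:: 0]; split=> [z|g]; first by rewrite inE => /eqP ->; apply: subgroup0.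
  exists 0; rewrite ?inE // lincomb_nil subr0.
  by apply: subgroup0; apply: subgroup_mulng.
have [s [Xs cover]] := IHt (fun i => Xt i.+1).
have Xy : X y by apply: (Xt 0%N).
exists [seq y *+ a + z | a <- iota 0 p, z <- s]; split.
  move=> _ /allpairsP [[a z] /= [_ zs ->]].
  by apply: subgroupD => //; [apply: subgroupMn|apply: Xs].
move=> g; have [z zs Xz] := cover (fun k => g k.+1).
have p_gt0 : (0 < p%:Z) by rewrite ltz_nat prime_gt0.
pose a := `|(g 0%N %% p)%Z|%N.
have def_a : a%:Z = (g 0%N %% p)%Z by rewrite /a gez0_abs // modz_ge0 // gt_eqF.
exists (y *+ a + z); first apply: allpairs_f => //.
  by rewrite mem_iota add0n -ltz_nat def_a ltz_pmod.
rewrite lincomb_cons opprD addrACA.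
have -> : y *~ g 0%N - y *+ a = y *~ ((g 0%N %/ p)%Z * p%:Z).
  by rewrite pmulrn def_a -mulrzBr {1}(divz_eq (g 0%N) p) addrK.
by apply: subgroupD; [apply: subgroup_mulng|apply: mulng_mulz|].
Qed.

(* When [pX <= W], this says that the image of [t] in [X / W] is free over [F_p]. *)
Definition pfree_mod W t :=
  forall f, W (lincomb t f) -> forall j, (j < size t)%N -> (p%:Z %| f j)%Z.

Lemma pfree_mod_antimono W W' t : (forall x, W' x -> W x) -> pfree_mod W t -> pfree_mod W' t.
Proof. by move=> W'W tW f /W'W; apply: tW. Qed.

Section MaximalPfree.
Variables (X W : A -> Prop).
Hypotheses (sX : subgroup X) (sW : subgroup W).
Hypothesis pXW : forall x, mulng p X x -> W x.

Lemma pfree_mod_maximal_span t x : pfree_mod W t -> X x -> ~ pfree_mod W (rcons t x) ->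
  exists g, W (x - lincomb t g).
Proof.
move=> t_pfree Xx Nfree.
have [f Nf] := not_all_ex_not _ _ Nfree; have [Wf Nall] := imply_to_and _ _ Nf.
have [j Nj] := not_all_ex_not _ _ Nall; have [ltj Ndvd] := imply_to_and _ _ Nj.
rewrite lincomb_rcons in Wf.
have /coprimezP [[u v] /= uv1] : coprimez (f (size t)) p%:Z.
  rewrite coprimezE coprime_sym prime_coprime //; apply/negP => /dvdzP [q fq].
  have Wt : W (lincomb t f).
    rewrite -(addrK (x *~ f (size t)) (lincomb t f)); apply: subgroupB => //.
    by rewrite fq; apply: pXW; apply: mulng_mulz.
  apply: Ndvd; move: ltj; rewrite size_rcons ltnS leq_eqVlt => /orP [/eqP ->|ltj].
    by rewrite fq dvdz_mull.
  exact: t_pfree Wt j ltj.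
exists (fun k => - (f k * u)).
have -> : x - lincomb t (fun k => - (f k * u)) =
    (lincomb t f + x *~ f (size t)) *~ u + x *~ (v * p%:Z).
  rewrite lincombN opprK lincombZ mulrzDl -mulrzA [f (size t) * u]mulrC -addrA -mulrzDr uv1.
  by rewrite mulr1z addrC.
apply: subgroupD => //; first exact: subgroupMz.
by apply: pXW; apply: mulng_mulz.
Qed.

Lemma fin_quot_pfree_bounded r :
  (forall t, (forall i, (i < size t)%N -> X t`_i) -> pfree_mod W t -> (size t <= r)%N) ->
  fin_quot X W.
Proof.
move=> bounded.
pose P k := exists t, [/\ size t = k, forall i, (i < size t)%N -> X t`_i & pfree_mod W t].
have P0 : P 0%N by exists [::]; split=> // f _ j.
have [k [t [size_t Xt t_pfree]] kmax] : exists2 k, P k & forall k', P k' -> (k' <= k)%N.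
  by apply: (ex_max_bounded (r := r)) P0 _ => k [t [<-]]; apply: bounded.
have span x : X x -> exists g, W (x - lincomb t g).
  move=> Xx; apply: pfree_mod_maximal_span => // free_tx.
  have : P k.+1.
    exists (rcons t x); split=> //; first by rewrite size_rcons size_t.
    move=> i; rewrite size_rcons ltnS leq_eqVlt nth_rcons => /orP [/eqP ->|ltit].
      by rewrite ltnn eqxx.
    by rewrite ltit; apply: Xt.
  by move/kmax; rewrite ltnn.
have [s [Xs cover]] := fin_cover_lincomb sX Xt.
exists s; split=> // y /span [g Wyg]; have [z zs Wgz] := cover g.
exists z => //; rewrite -(subrK (lincomb t g) y) -addrA.
by apply: subgroupD => //; apply: pXW.
Qed.

End MaximalPfree.

(* Infinite descent: a relation modulo the [p]-pure [T] whose coefficients are all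
   divisible by [p] can be divided by [p]. *)
Lemma pfree_mod_size_le X T t r : subgroup X -> subgroup T ->
  (forall w, X w -> T (w *+ p) -> T w) ->
  (forall s : seq A, lin_indep s -> (size s <= r)%N) ->
  (forall i, (i < size t)%N -> X t`_i) -> pfree_mod T t -> (size t <= r)%N.
Proof.
move=> sX sT T_pure rank_r Xt t_pfree; rewrite leqNgt; apply/negP => lt_r_t.
have Dt : ~ lin_indep t by move/rank_r; rewrite leqNgt lt_r_t.
have [f0 [rel0 nontriv0]] := lin_dep_relation Dt.
pose size_coef f := (\sum_(0 <= j < size t) `|f j|)%N.
have coef_le f j : (j < size t)%N -> (`|f j| <= size_coef f)%N.
  by move=> ltj; rewrite /size_coef (bigD1_seq j) ?mem_index_iota ?iota_uniq //= leq_addr.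
suff descent N f : (size_coef f <= N)%N -> T (lincomb t f) ->
    (exists2 j, (j < size t)%N & f j != 0) -> False.
  by apply: (descent _ f0 (leqnn _)) => //; rewrite rel0; apply: subgroup0.
elim: N f => [|N IHN] f le_N Tf [j ltj fj_neq0].
  by move: (leq_trans (coef_le f j ltj) le_N); rewrite leqn0 absz_eq0 (negbTE fj_neq0).
pose h k := (f k %/ p%:Z)%Z.
have fh k : (k < size t)%N -> f k = h k * p%:Z by move=> ltk; rewrite divzK // (t_pfree _ Tf).
have Th : T (lincomb t h).
  apply: T_pure; first exact: subgroup_lincomb.
  rewrite pmulrn -lincombZ (@eq_lincomb _ _ _ f) // => k ltk.
  by rewrite -fh.
have hj_neq0 : h j != 0 by apply: contraNneq fj_neq0; rewrite fh // => ->; rewrite mul0r.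
have size_fh : size_coef f = (size_coef h * p)%N.
  by rewrite /size_coef big_distrl; apply: eq_big_nat => k /andP [_ ltk]; rewrite fh // abszM.
apply: (IHN h) Th _; last by exists j.
rewrite -ltnS (leq_trans _ le_N) // size_fh ltn_Pmulr ?prime_gt1 //.
by apply: leq_trans (coef_le h j ltj); rewrite absz_gt0.
Qed.

Lemma fin_quot_finite_rank X T r : subgroup X -> subgroup T ->
  (forall w, X w -> T (w *+ p) -> T w) ->
  (forall s : seq A, lin_indep s -> (size s <= r)%N) ->
  fin_quot X (sumg (mulng p X) T).
Proof.
move=> sX sT T_pure rank_r; apply: fin_quot_pfree_bounded => //.
- by apply: subgroup_sumg => //; apply: subgroup_mulng.
- by move=> x pXx; exists x, 0; rewrite addr0; do !split=> //; apply: subgroup0.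
move=> t Xt t_pfree; apply: (pfree_mod_size_le sX sT T_pure rank_r Xt).
apply: pfree_mod_antimono t_pfree => x Tx.
by exists 0, x; rewrite add0r; do !split=> //; apply: subgroup0; apply: subgroup_mulng.
Qed.

End FiniteRank.

Lemma nat_pdiv_ind (P : nat -> Prop) : P 1%N ->
  (forall p n, prime p -> (0 < n)%N -> P n -> P (p * n)%N) -> forall n, (0 < n)%N -> P n.
Proof.
move=> P1 Pstep; elim/ltn_ind=> n IHn n_gt0; have [n_le1|n_gt1] := leqP n 1.
  by have -> : n = 1%N by apply/anti_leq/andP.
have [p_prime p_dvd] := (pdiv_prime n_gt1, pdiv_dvd n); rewrite -(divnK p_dvd) mulnC.
have n'_gt0 : (0 < n %/ pdiv n)%N by rewrite divn_gt0 ?prime_gt0 // dvdn_leq.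
by apply: Pstep => //; apply: IHn; rewrite // ltn_Pdiv // prime_gt1.
Qed.

Lemma fin_quot_mulng_of_primes (A : zmodType) (q : nat) : (0 < q)%N ->
  (forall p (X : A -> Prop), prime p -> (p %| q)%N -> subgroup X -> fin_quot X (mulng p X)) ->
  forall X : A -> Prop, subgroup X -> fin_quot X (mulng q X).
Proof.
move: q; apply: nat_pdiv_ind => [_ X sX|p q p_prime _ IHq fin_pq X sX].
  by apply: fin_quot_subset => [|x /mulng1]; first exact: subgroup0.
apply: (fin_quot_trans sX (mulng_subset (q := p) sX)); first by apply: fin_pq; rewrite ?dvdn_mulr.
apply: (fin_quot_mono (X := mulng q (mulng p X))) => [x /mulngM //|].
apply: IHq => [r Y r_prime r_dvd|]; last exact: subgroup_mulng.
by apply: fin_pq; rewrite ?(dvdn_trans r_dvd) ?dvdn_mull.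
Qed.

Lemma chain_decr_le (T : Type) (P : nat -> T -> Prop) :
  (forall i x, P i.+1 x -> P i x) -> forall i j x, (i <= j)%N -> P j x -> P i x.
Proof.
move=> decr i j x; elim: j => [|j IHj]; first by rewrite leqn0 => /eqP ->.
by rewrite leq_eqVlt => /orP [/eqP -> //|]; rewrite ltnS => /IHj Pi /decr.
Qed.

Lemma chain_decr_stable_seq (T : eqType) (P : nat -> T -> Prop) (F : seq T) :
  (forall i x, P i.+1 x -> P i x) ->
  exists N, forall i, (N <= i)%N -> forall f, f \in F -> (P i f <-> P N f).
Proof.
move=> decr; elim: F => [|a F [N stableF]]; first by exists 0%N.
have [Pa|/not_all_ex_not [i0 Ni0]] := classic (forall i, P i a).
  by exists N => i leNi f; rewrite inE => /orP [/eqP ->|/stableF]; [split=> _; apply: Pa|apply].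
have gone i : (i0 <= i)%N -> ~ P i a by move=> le_i0i /(chain_decr_le decr le_i0i).
exists (maxn N i0) => i le_i f; rewrite inE => /orP [/eqP ->|fF].
  have := gone _ (leq_maxr N i0); have := gone i (leq_trans (leq_maxr N i0) le_i).
  by split.
rewrite (stableF i _ f fF) ?(stableF (maxn N i0) _ f fF) ?leq_maxl //.
by apply: leq_trans le_i; rewrite leq_maxl.
Qed.

Section Primary.
Variables (A : zmodType) (q : nat).
Implicit Types (S X Y : A -> Prop).

Lemma mulrn_expn_eq0_le (x : A) e e' : x *+ q ^ e = 0 -> (e <= e')%N -> x *+ q ^ e' = 0.
Proof. by move=> xe le_ee'; rewrite -(subnKC le_ee') expnD mulrnA xe mul0rn. Qed.

Lemma mulrn_expn_eq0_seq S (F : seq A) : (forall x, S x -> exists e, x *+ q ^ e = 0) ->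
  (forall f, f \in F -> S f) -> exists e, forall f, f \in F -> f *+ q ^ e = 0.
Proof.
move=> S_primary; elim: F => [|a F IHF] SF; first by exists 0%N.
have [e1 ae1] := S_primary a (SF a (mem_head _ _)).
have [e2 Fe2] := IHF (fun f fF => SF f (mem_behead (fF : f \in behead (a :: F)))).
exists (maxn e1 e2) => f; rewrite inE => /orP [/eqP ->|fF].
  by apply: mulrn_expn_eq0_le ae1 _; rewrite leq_maxl.
by apply: mulrn_expn_eq0_le (Fe2 f fF) _; rewrite leq_maxr.
Qed.

Definition mulng_inf Y : A -> Prop := fun y => forall k, mulng (q ^ k) Y y.

Lemma subgroup_mulng_inf Y : subgroup Y -> subgroup (mulng_inf Y).
Proof.
move=> sY; split=> [k|x y Yx Yy k]; first by apply: subgroup0; apply: subgroup_mulng.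
by apply: subgroupB; [apply: subgroup_mulng|apply: Yx|apply: Yy].
Qed.

Lemma mulng_inf_mono Y Y' : (forall x, Y x -> Y' x) -> forall y, mulng_inf Y y -> mulng_inf Y' y.
Proof. by move=> YY' y Yy k; have [x [Yx ->]] := Yy k; exists x; split=> //; apply: YY'. Qed.

Lemma mulng_inf_subset Y y : mulng_inf Y y -> Y y.
Proof. by move=> /(_ 0%N) [x [Yx ->]]; rewrite expn0 mulr1n. Qed.

Lemma fin_quot_mulng_expn S Y :
  (forall X, subgroup X -> (forall x, X x -> S x) -> fin_quot X (mulng q X)) ->
  subgroup Y -> (forall y, Y y -> S y) -> forall k, fin_quot Y (mulng (q ^ k) Y).
Proof.
move=> S_fin sY YS; elim=> [|k IHk].
  by apply: fin_quot_subset => [|x /mulng1]; rewrite ?expn0 //; apply: subgroup0.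
apply: (fin_quot_trans sY (mulng_subset (q := q ^ k) sY)) => //.
apply: (fin_quot_mono (X := mulng q (mulng (q ^ k) Y))) => [x /mulngM|]; first by rewrite -expnSr.
by apply: S_fin => [|x /(mulng_subset sY) /YS]; first exact: subgroup_mulng.
Qed.

(* Some [q^e] kills the finitely many representatives of [Y / qY], whence [q^e Y = q^e.+1 Y]. *)
Lemma mulng_inf_stable S Y : (forall x, S x -> exists e, x *+ q ^ e = 0) ->
  subgroup Y -> (forall y, Y y -> S y) -> fin_quot Y (mulng q Y) ->
  exists e, (forall y, mulng_inf Y y <-> mulng (q ^ e) Y y) /\
            (forall y, mulng (q ^ e) Y y -> mulng (q ^ e.+1) Y y).
Proof.
move=> S_primary sY YS [F [FY cover]].
have [e Fe] := mulrn_expn_eq0_seq S_primary (fun f fF => YS f (FY f fF)).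
have step y : Y y -> exists y', Y y' /\ y *+ q ^ e = y' *+ q ^ e.+1.
  move=> Yy; have [f fF [y1 [Yy1 def_y1]]] := cover y Yy; exists y1; split=> //.
  by rewrite -(subrK f y) def_y1 mulrnDl (Fe f fF) addr0 -mulrnA -expnS.
have steps k y : Y y -> exists y', Y y' /\ y *+ q ^ e = y' *+ q ^ (e + k).
  elim: k y => [|k IHk] y Yy; first by exists y; rewrite addn0.
  have [y' [Yy' ->]] := IHk y Yy; have [y'' [Yy'' def_y'']] := step y' Yy'.
  by exists y''; rewrite expnD mulrnA def_y'' -mulrnA -expnD addSnnS.
exists e; split=> [y|_ [x [Yx ->]]]; last by have [y' [Yy' ->]] := step x Yx; exists y'.
split=> [/(_ e) //|[x [Yx ->]] k].
have [le_ke|lt_ek] := leqP k e.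
  exists (x *+ q ^ (e - k)); split; first exact: subgroupMn.
  by rewrite -mulrnA -expnD subnK.
by have [y' [Yy' ->]] := steps (k - e)%N x Yx; exists y'; rewrite subnKC // ltnW.
Qed.

Lemma divisible_contains_primary (D D' : A -> Prop) :
  subgroup D -> subgroup D' -> (forall x, D' x -> D x) ->
  (forall d, D' d -> exists d', D' d' /\ d = d' *+ q) ->
  (forall d, D d -> d *+ q = 0 -> D' d) ->
  forall e d, D d -> d *+ q ^ e = 0 -> D' d.
Proof.
move=> sD sD' D'D D'_div socle; elim=> [|e IHe] d Dd.
  by rewrite expn0 mulr1n => ->; apply: subgroup0.
rewrite expnS mulrnA => dqe.
have [d' [D'd' def_dq]] := D'_div _ (IHe _ (subgroupMn _ sD Dd) dqe).
rewrite -(subrK d' d); apply: subgroupD => //; apply: socle.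
  by apply: subgroupB => //; apply: D'D.
by rewrite mulrnBl def_dq subrr.
Qed.

End Primary.

Section PrimaryMinCond.
Variables (A : zmodType) (S : A -> Prop) (q : nat).
Hypotheses (sS : subgroup S) (S_primary : forall x, S x -> exists e, x *+ q ^ e = 0).
Hypothesis S_fin : forall X, subgroup X -> (forall x, X x -> S x) -> fin_quot X (mulng q X).

Lemma mulng_inf_divisible Y : subgroup Y -> (forall y, Y y -> S y) ->
  forall d, mulng_inf q Y d -> exists d', mulng_inf q Y d' /\ d = d' *+ q.
Proof.
move=> sY YS; have [e [def_inf stable]] := mulng_inf_stable S_primary sY YS (S_fin sY YS).
move=> d /def_inf /stable [x [Yx ->]]; exists (x *+ q ^ e).
by rewrite -mulrnA -expnSr; split=> //; apply/def_inf; exists x.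
Qed.

Lemma mulng_inf_chain_stable (X : nat -> A -> Prop) : (forall i, subgroup (X i)) ->
  (forall i x, X i x -> S x) -> (forall i x, X i.+1 x -> X i x) ->
  exists N, forall i, (N <= i)%N -> forall x, mulng_inf q (X i) x <-> mulng_inf q (X N) x.
Proof.
move=> sX XS X_decr; pose E i := mulng_inf q (X i).
pose Z x := S x /\ x *+ q = 0.
have sZ : subgroup Z.
  split=> [|x y [Sx qx] [Sy qy]]; first by split; [apply: subgroup0|rewrite mul0rn].
  by split; [apply: subgroupB|rewrite mulrnBl qx qy subrr].
have [F0 [_ coverZ]] := S_fin sZ (fun x (Zx : Z x) => proj1 Zx).
have ZF0 z : Z z -> z \in F0.
  move=> Zz; have [f fF0 [x [[_ qx] def_x]]] := coverZ z Zz.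
  by move/eqP: def_x; rewrite qx subr_eq0 => /eqP ->.
have E_decr i x : E i.+1 x -> E i x by apply: mulng_inf_mono; apply: X_decr.
have [N stable] := chain_decr_stable_seq F0 E_decr.
exists N => i le_Ni x; split; first exact: (chain_decr_le E_decr).
move=> ENx; have [e xe] := S_primary (XS _ _ (mulng_inf_subset ENx)).
apply: (divisible_contains_primary (q := q) _ _ _ _ _ ENx xe).
- exact/subgroup_mulng_inf.
- exact/subgroup_mulng_inf.
- by move=> y; apply: (chain_decr_le E_decr).
- by apply: mulng_inf_divisible => //; apply: XS.
move=> d ENd qd; apply/(stable i le_Ni d); last exact: ENd.
by apply: ZF0; split=> //; apply: XS (mulng_inf_subset ENd).
Qed.

Lemma min_cond_of_fin_quot_mulng : min_cond S.
Proof.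
move=> X sX XS X_decr; pose E i := mulng_inf q (X i).
have X_le i j x : (i <= j)%N -> X j x -> X i x by apply: chain_decr_le.
have [N1 E_stable] := mulng_inf_chain_stable sX XS X_decr.
have [G [_ coverG]] : fin_quot (X N1) (E N1).
  have [e [def_inf _]] := mulng_inf_stable S_primary (sX N1) (XS N1) (S_fin (sX N1) (XS N1)).
  apply: (fin_quot_mono (X := mulng (q ^ e) (X N1))) => [y /def_inf //|].
  exact: (fin_quot_mulng_expn S_fin (sX N1) (XS N1)).
have [N2 X_stableG] := chain_decr_stable_seq G X_decr.
exists (maxn N1 N2) => i le_i x; set N := maxn N1 N2.
have [le_N1N le_N2N] : (N1 <= N)%N /\ (N2 <= N)%N by rewrite leq_maxl leq_maxr.
split; first exact: X_le.
move=> XNx; have [g gG Egx] := coverG x (X_le _ _ _ le_N1N XNx).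
have Eix : E i (x - g) by apply/(E_stable i (leq_trans le_N1N le_i)).
have ENx : E N (x - g) by apply/(E_stable N le_N1N).
have XNg : X N g by rewrite -(subKr x g); apply: subgroupB => //; apply: mulng_inf_subset ENx.
have Xig : X i g.
  by apply/(X_stableG i (leq_trans le_N2N le_i) g gG)/(X_stableG N le_N2N g gG).
by rewrite -(subrK g x); apply: subgroupD => //; apply: mulng_inf_subset Eix.
Qed.

End PrimaryMinCond.

Section TailSpan.
Variables (A : zmodType) (p : nat) (X : A -> Prop) (x : nat -> A).
Hypotheses (p_prime : prime p) (sX : subgroup X) (Xx : forall i, X (x i)).
Hypothesis x_new : forall M g, ~ mulng p X (x M - lincomb (mkseq x M) g).

Definition tail_span i : A -> Prop := fun y =>
  exists M h, (forall j, (j < i)%N -> h j = 0) /\ mulng p X (y - lincomb (mkseq x M) h).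

Lemma subgroup_tail_span i : subgroup (tail_span i).
Proof.
split.
  exists 0%N, (fun _ => 0); rewrite lincomb0 subr0; split=> //.
  by apply: subgroup0; apply: subgroup_mulng.
move=> y1 y2 [M1 [h1 [h1_tail y1h1]]] [M2 [h2 [h2_tail y2h2]]].
pose h k := (if (k < M1)%N then h1 k else 0) - (if (k < M2)%N then h2 k else 0).
exists (maxn M1 M2), h; split=> [j ltji|]; first by rewrite /h h1_tail ?h2_tail // !if_same subrr.
rewrite lincombB -!lincomb_mkseq_widen ?leq_maxl ?leq_maxr //.
have -> : y1 - y2 - (lincomb (mkseq x M1) h1 - lincomb (mkseq x M2) h2) =
    (y1 - lincomb (mkseq x M1) h1) - (y2 - lincomb (mkseq x M2) h2).
  by rewrite !opprB addrACA [RHS]addrACA [- _ + - _]addrC.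
by apply: subgroupB => //; apply: subgroup_mulng.
Qed.

Lemma tail_span_subset i y : tail_span i y -> X y.
Proof.
move=> [M [h [_ pXy]]]; rewrite -(subrK (lincomb (mkseq x M) h) y).
apply: subgroupD => //; first exact: mulng_subset pXy.
by apply: subgroup_lincomb => // k; rewrite size_mkseq => ltkM; rewrite nth_mkseq.
Qed.

Lemma tail_span_decr i y : tail_span i.+1 y -> tail_span i y.
Proof. by move=> [M [h [h_tail pXy]]]; exists M, h; split=> // j /ltnW; apply: h_tail. Qed.

Lemma tail_span_mem i : tail_span i (x i).
Proof.
exists i.+1, (fun k => if k == i then 1 else 0); split=> [j /ltn_eqF -> //|].
rewrite lincomb_delta ?size_mkseq // nth_mkseq // mulr1z subrr.
by apply: subgroup0; apply: subgroup_mulng.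
Qed.

Lemma tail_span_strict i : ~ tail_span i.+1 (x i).
Proof.
move=> [M [h [h_tail]]]; elim: M h h_tail => [|M IHM] h h_tail.
  by rewrite lincomb_nil subr0; have := x_new (M := i) (g := fun _ => 0); rewrite lincomb0 subr0.
rewrite mkseqS lincomb_rcons size_mkseq.
have [leMi|ltiM] := leqP M i; first by rewrite h_tail ?ltnS // mulr0z addr0; apply: IHM.
have [/dvdzP [c def_hM]|Ndvd] := boolP (p%:Z %| h M)%Z.
  move=> pXy; apply: (IHM h h_tail).
  set L := lincomb _ h in pXy *.
  have -> : x i - L = (x i - (L + x M *~ h M)) + x M *~ h M by rewrite opprD addrA subrK.
  by rewrite {2}def_hM; apply: subgroupD => //; [apply: subgroup_mulng|apply: mulng_mulz].
have /coprimezP [[u v] /= uv1] : coprimez (h M) p%:Z.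
  by rewrite coprimezE coprime_sym prime_coprime.
set L := lincomb _ h; set T := x i - (L + x M *~ h M) => pXT.
(* Solving the relation for [x M] exhibits it modulo [pX] in the span of the earlier [x j]. *)
apply: (x_new (M := M) (g := fun k => ((if k == i then 1 else 0) - h k) * u)).
have -> : lincomb (mkseq x M) (fun k => ((if k == i then 1 else 0) - h k) * u) = (x i - L) *~ u.
  by rewrite lincombZ lincombB lincomb_delta ?size_mkseq // nth_mkseq // mulr1z.
have -> : x i - L = T + x M *~ h M by rewrite /T opprD addrA subrK.
have {1}-> : x M = x M *~ (h M * u) + x M *~ (v * p%:Z) by rewrite -mulrzDr mulrC uv1.
have cancel_a (a b c : A) : (a + b) - (c + a) = b - c.
  by rewrite [c + a]addrC opprD addrACA subrr add0r.
rewrite mulrzDl -mulrzA cancel_a.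
apply: subgroupD; [exact: subgroup_mulng|exact: mulng_mulz|].
by apply: subgroupN; [exact: subgroup_mulng|apply: subgroupMz => //; exact: subgroup_mulng].
Qed.

End TailSpan.

Lemma infinite_quot_new_seq (A : zmodType) (p : nat) (X : A -> Prop) : prime p -> subgroup X ->
  ~ fin_quot X (mulng p X) ->
  exists x : nat -> A, (forall i, X (x i)) /\ forall M g, ~ mulng p X (x M - lincomb (mkseq x M) g).
Proof.
move=> p_prime sX Nfin.
have step t : exists y, (forall i, (i < size t)%N -> X t`_i) ->
    X y /\ forall g, ~ mulng p X (y - lincomb t g).
  have [Xt|NXt] := classic (forall i, (i < size t)%N -> X t`_i); last by exists 0.
  apply: NNPP => Nstep; apply: Nfin; have [s [Xs cover]] := fin_cover_lincomb p_prime sX Xt.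
  exists s; split=> // y Xy.
  have [g pXyg] : exists g, mulng p X (y - lincomb t g).
    by apply: NNPP => Ng; apply: Nstep; exists y => _; split=> // g pXyg; apply: Ng; exists g.
  have [z zs pXgz] := cover g; exists z => //.
  rewrite -(subrK (lincomb t g) y) -addrA.
  by apply: subgroupD => //; apply: subgroup_mulng.
have [x x_step] := choice_mkseq step.
have {}x_step M : (forall i, (i < M)%N -> X (x i)) ->
    X (x M) /\ forall g, ~ mulng p X (x M - lincomb (mkseq x M) g).
  by move=> XM; apply: x_step => i; rewrite size_mkseq => ltiM; rewrite nth_mkseq //; apply: XM.
have Xx M i : (i < M)%N -> X (x i).
  elim: M i => [//|M IHM] i; rewrite ltnS leq_eqVlt => /orP [/eqP ->|/IHM //].
  by case: (x_step M IHM).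
by exists x; split=> [i|M]; [apply: (Xx i.+1)|case: (x_step M (Xx M))].
Qed.

Lemma fin_quot_mulng_of_min_cond (A : zmodType) (S X : A -> Prop) (p : nat) :
  prime p -> min_cond S -> subgroup X -> (forall x, X x -> S x) -> fin_quot X (mulng p X).
Proof.
move=> p_prime minS sX XS; apply: NNPP => Nfin.
have [x [Xx x_new]] := infinite_quot_new_seq p_prime sX Nfin.
have [N stable] := minS (tail_span p X x) (subgroup_tail_span p x sX)
  (fun i y Ty => XS y (tail_span_subset sX Xx Ty)) (@tail_span_decr _ p X x).
apply: (tail_span_strict p_prime sX Xx x_new (i := N)).
by apply/(stable N.+1 (leqnSn N)); apply: tail_span_mem.
Qed.

Lemma coprimez_primeX (a : int) p k : prime p -> ~~ (p%:Z %| a)%Z -> coprimez a (p ^ k)%:Z.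
Proof. by move=> p_prime Ndvd; rewrite coprimezE coprimeXr // coprime_sym prime_coprime. Qed.

Lemma mulrzMn_eq0 (A : zmodType) (y : A) (v : int) N : y *+ N = 0 -> y *~ (v * N%:Z) = 0.
Proof. by move=> yN; rewrite mulrzA mulrzAC -pmulrn yN mul0rz. Qed.

Lemma mulrz_coprime_inv (A : zmodType) (a : int) (N : nat) : coprimez a N%:Z ->
  exists u : int, forall y : A, y *+ N = 0 -> y *~ (u * a) = y.
Proof.
move=> /coprimezP [[u v] /= uv1]; exists u => y yN.
by rewrite -[in RHS](mulr1z y) -uv1 mulrzDr mulrzMn_eq0 // addr0.
Qed.

Lemma coprimez_dvd_abs1 (m n : int) : coprimez m n -> (n %| m)%Z -> `|n|%N = 1%N.
Proof.
move=> cop_mn /dvdzP [c def_m]; move: cop_mn; rewrite def_m coprimezMl => /andP [_].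
by rewrite coprimezE /coprime gcdnn => /eqP.
Qed.

Lemma dvdn_expn_of_primes (k q : nat) : (0 < k)%N ->
  (forall p, prime p -> (p %| k)%N -> (p %| q)%N) -> (k %| q ^ k)%N.
Proof.
move: k; apply: nat_pdiv_ind => [_|p k p_prime k_gt0 IHk pi_pk]; first by rewrite dvd1n.
have IHk' := IHk (fun r r_prime r_dvd => pi_pk r r_prime (dvdn_mull p r_dvd)).
apply: (@dvdn_trans (q ^ k.+1)); first by rewrite expnS dvdn_mul ?pi_pk ?dvdn_mulr.
by apply: dvdn_exp2l; rewrite ltn_Pmull // prime_gt1.
Qed.

Lemma coprime_of_pi (m n : int) (k : nat) : coprimez m n -> (0 < k)%N ->
  (forall p, prime p -> (p %| k)%N -> (p %| `|m|)%N) -> coprime k `|n|.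
Proof.
move=> cop_mn k_gt0 pi_k; apply: NNPP => Ncop.
have g_gt1 : (1 < gcdn k `|n|)%N.
  by rewrite ltn_neqAle eq_sym gcdn_gt0 k_gt0 andbT; apply/negP => /eqP g1; apply: Ncop; apply/eqP.
have /pdiv_prime p_prime := g_gt1; have := pdiv_dvd (gcdn k `|n|).
rewrite dvdn_gcd => /andP [p_k p_n].
have : (pdiv (gcdn k `|n|) %| gcdn `|m| `|n|)%N by rewrite dvdn_gcd pi_k.
move: cop_mn; rewrite coprimezE /coprime => /eqP ->; rewrite dvdn1 => /eqP p1.
by rewrite p1 in p_prime.
Qed.

Section PadicMultiplication.
Variables (A : zmodType) (phi : A -> A) (alpha : nat -> nat -> int).
Hypothesis phi_endo : endo phi.
Hypothesis alpha_compat :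
  forall p k, prime p -> (alpha p k.+1 = alpha p k %[mod (p ^ k)%:Z])%Z.
Hypothesis phi_alpha : forall p k x, prime p -> x *+ p ^ k = 0 -> phi x = x *~ alpha p k.

Lemma alpha_dvd_sub p K k : prime p -> (K <= k)%N -> ((p ^ K)%:Z %| alpha p k - alpha p K)%Z.
Proof.
move=> p_prime; elim: k => [|k IHk]; first by rewrite leqn0 => /eqP ->; rewrite subrr dvdz0.
rewrite leq_eqVlt => /orP [/eqP ->|]; first by rewrite subrr dvdz0.
rewrite ltnS => le_Kk; rewrite -(subrK (alpha p k) (alpha p k.+1)) -addrA rpredD ?IHk //.
apply: (@dvdz_trans (p ^ k)%:Z); first by rewrite dvdzE /= dvdn_exp2l.
by rewrite -eqz_mod_dvd; apply/eqP/alpha_compat.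
Qed.

Lemma alpha_dvd_p p k : prime p -> (0 < k)%N ->
  (p%:Z %| alpha p k)%Z = (p%:Z %| alpha p 1%N)%Z.
Proof.
move=> p_prime k_gt0; have := alpha_dvd_sub p_prime k_gt0; rewrite expn1 => dvd_sub.
by rewrite -(subrK (alpha p 1%N) (alpha p k)) rpredDl.
Qed.

Lemma padic_mult_torsion k x : (0 < k)%N -> x *+ k = 0 -> exists c, phi x = x *~ c.
Proof.
elim/ltn_ind: k x => k IHk x k_gt0 xk.
have [k_le1|k_gt1] := leqP k 1.
  have k_eq1 : k = 1%N by apply/anti_leq/andP.
  by move: xk; rewrite k_eq1 mulr1n => ->; exists 0; rewrite endo0 ?mul0rz.
have p_prime : prime (pdiv k) by apply: pdiv_prime.
have [m cop_pm def_k] := pfactor_coprime p_prime k_gt0.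
set p := pdiv k in p_prime cop_pm def_k; set a := logn p k in def_k.
have a_gt0 : (0 < a)%N by rewrite logn_gt0 mem_primes p_prime k_gt0 pdiv_dvd.
have m_gt0 : (0 < m)%N by move: k_gt0; rewrite def_k muln_gt0 => /andP [].
have lt_mk : (m < k)%N.
  by rewrite def_k -[X in (X < _)%N]muln1 ltn_pmul2l // -(expn0 p) ltn_exp2l // prime_gt1.
have /coprimezP [[u v] /= uv1] : coprimez (p ^ a)%:Z m%:Z by rewrite coprimezE /= coprimeXl.
(* Split [x] into its [p]-part [x1] and its [p']-part [x2]. *)
set x1 := x *~ (v * m%:Z); set x2 := x *~ (u * (p ^ a)%:Z).
have def_x : x = x1 + x2 by rewrite -mulrzDr addrC uv1 mulr1z.
have x1_pa : x1 *+ p ^ a = 0 by rewrite pmulrn -mulrzA -mulrA -PoszM -def_k mulrzMn_eq0.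
have x2_m : x2 *+ m = 0 by rewrite pmulrn -mulrzA -mulrA -PoszM mulnC -def_k mulrzMn_eq0.
have [c2 phi_x2] := IHk m lt_mk x2 m_gt0 x2_m.
exists (v * m%:Z * alpha p a + u * (p ^ a)%:Z * c2).
by rewrite {1}def_x phi_endo (phi_alpha p_prime x1_pa) phi_x2 -!mulrzA mulrzDr.
Qed.

Section PGroup.
Variable p : nat.
Hypotheses (p_prime : prime p) (A_pgroup : p_group A p).

Lemma pgroup_annihilated (x : A) : exists k, (0 < k)%N /\ x *+ p ^ k = 0.
Proof.
by have [k xk] := A_pgroup x; exists k.+1; split=> //; apply: mulrn_expn_eq0_le xk _.
Qed.

(* Modulo the order [p^k] of [x], [alpha_p] is [p^v] times a unit, which is invertible
   mod [p^k]. *)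
Lemma padic_mult_onto_mulrn v K u0 : (v < K)%N -> alpha p K = (p ^ v)%:Z * u0 ->
  ~~ (p%:Z %| u0)%Z -> forall X, subgroup X -> forall x, X x ->
  exists y, X y /\ phi y = x *+ p ^ v.
Proof.
move=> lt_vK def_aK Ndvd X sX x Xx.
have [k0 xk0] := A_pgroup x; set k := maxn k0 K.
have xk : x *+ p ^ k = 0 by apply: mulrn_expn_eq0_le xk0 _; rewrite leq_maxl.
have [t def_t] : exists t, alpha p k - alpha p K = t * (p ^ K)%:Z.
  by apply/dvdzP; apply: alpha_dvd_sub => //; rewrite leq_maxr.
have pK_split : (p ^ K)%:Z = (p ^ v)%:Z * (p ^ (K - v))%:Z.
  by rewrite -PoszM -expnD subnKC // ltnW.
set u1 := u0 + t * (p ^ (K - v))%:Z.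
have def_ak : alpha p k = (p ^ v)%:Z * u1.
  by rewrite -(subrK (alpha p K) (alpha p k)) def_t def_aK pK_split /u1 mulrDr addrC mulrCA.
have Ndvd1 : ~~ (p%:Z %| u1)%Z.
  apply: contra Ndvd => dvd_u1; rewrite -(addrK (t * (p ^ (K - v))%:Z) u0) rpredB //.
  by rewrite dvdz_mull // dvdzE /= -{1}(expn1 p) dvdn_exp2l // subn_gt0.
have [w wu1] := mulrz_coprime_inv A (coprimez_primeX k p_prime Ndvd1).
exists (x *~ w); split; first exact: subgroupMz.
have xwk : (x *~ w) *+ p ^ k = 0 by rewrite pmulrn mulrzAC -pmulrn xk mul0rz.
by rewrite (phi_alpha p_prime xwk) def_ak -mulrzA mulrCA mulrC mulrzA (wu1 x xk) -pmulrn.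
Qed.

Lemma padic_unit_onto : ~~ (p%:Z %| alpha p 1%N)%Z ->
  forall X, subgroup X -> forall x, X x -> exists y, X y /\ phi y = x.
Proof.
move=> Ndvd X sX x Xx; have def_a1 : alpha p 1%N = (p ^ 0)%:Z * alpha p 1%N by rewrite mul1r.
have [y [Xy phi_y]] := padic_mult_onto_mulrn (ltn0Sn 0) def_a1 Ndvd sX Xx.
by exists y; rewrite phi_y expn0 mulr1n.
Qed.

Lemma padic_unit_injective : ~~ (p%:Z %| alpha p 1%N)%Z -> injective phi.
Proof.
move=> Ndvd y1 y2 phi_eq; apply/eqP; rewrite -subr_eq0; apply/eqP.
have [k [k_gt0 dk]] := pgroup_annihilated (y1 - y2).
have Ndvd_k : ~~ (p%:Z %| alpha p k)%Z by rewrite alpha_dvd_p.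
have [u uk] := mulrz_coprime_inv A (coprimez_primeX k p_prime Ndvd_k).
by rewrite -(uk _ dk) -mulrzA_C -(phi_alpha p_prime dk) endoB // phi_eq subrr mul0rz.
Qed.

Lemma padic_unit_bijective : ~~ (p%:Z %| alpha p 1%N)%Z -> bijective phi.
Proof.
move=> Ndvd; have onto x : exists y, phi y = x.
  by have [y [_ <-]] := padic_unit_onto Ndvd (@subgroupT A) (x := x) I; exists y.
have [psi phi_psi] := ClassicalEpsilon.choice _ onto.
exists psi => // y; apply: (padic_unit_injective Ndvd); exact: phi_psi.
Qed.

Lemma padic_unit_left_inertial : ~~ (p%:Z %| alpha p 1%N)%Z -> left_inertial phi.
Proof.
move=> Ndvd X sX; apply: fin_quot_subset => [|x Xx]; first exact: subgroup0.
by split=> //; have [y [Xy <-]] := padic_unit_onto Ndvd sX Xx; exists y.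
Qed.

Lemma bijective_padic_unit : infinite_group A -> bijective phi -> ~~ (p%:Z %| alpha p 1%N)%Z.
Proof.
move=> infA /bij_inj phi_inj; apply/negP => /dvdzP [c def_a1]; apply: infA; exists [:: 0] => x.
have no_ptors (y : A) : y *+ p = 0 -> y = 0.
  move=> yp; apply: phi_inj; rewrite endo0 // (phi_alpha p_prime (k := 1%N)) ?expn1 //.
  by rewrite def_a1 mulrzMn_eq0.
have [k xk] := A_pgroup x; suff -> : x = 0 by rewrite mem_head.
elim: k x xk => [|k IHk] x; first by rewrite expn0 mulr1n.
by rewrite expnS mulrnA => /IHk /no_ptors.
Qed.

Lemma left_inertial_min_cond : left_inertial phi -> (p%:Z %| alpha p 1%N)%Z ->
  min_cond (fun _ : A => True).
Proof.
move=> phi_li dvd_a1; apply: (min_cond_of_fin_quot_mulng (q := p) (@subgroupT A)) => [x _|X sX _].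
  by have [k xk] := A_pgroup x; exists k.
apply: fin_quot_mono (phi_li X sX) => _ [_ [x [Xx ->]]].
have [k [k_gt0 xk]] := pgroup_annihilated x.
rewrite (phi_alpha p_prime xk).
have /dvdzP [c ->] : (p%:Z %| alpha p k)%Z by rewrite alpha_dvd_p.
exact: mulng_mulz.
Qed.

Lemma padic_mult_valuation : nonzero_map phi ->
  exists v K u0, [/\ (v < K)%N, alpha p K = (p ^ v)%:Z * u0 & ~~ (p%:Z %| u0)%Z].
Proof.
case=> x0 phi_x0; have [K [K_gt0 x0K]] := pgroup_annihilated x0.
rewrite (phi_alpha p_prime x0K) in phi_x0; set a := alpha p K in phi_x0 *.
have a_gt0 : (0 < `|a|)%N by rewrite absz_gt0; apply: contraNneq phi_x0 => ->; rewrite mulr0z.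
have [u cop_pu def_a] := pfactor_coprime p_prime a_gt0; set v := logn p `|a| in def_a.
exists v, K, ((-1) ^+ (a < 0)%R * u%:Z); split.
- rewrite ltnNge; apply: contra phi_x0 => le_Kv.
  have /dvdzP [c ->] : ((p ^ K)%:Z %| a)%Z by rewrite dvdzE /= def_a dvdn_mull // dvdn_exp2l.
  by rewrite mulrzMn_eq0.
- by rewrite -/a {1}(intEsign a) def_a PoszM [RHS]mulrCA [u%:Z * _]mulrC.
- by rewrite dvdzE abszM absz_sign mul1n -prime_coprime.
Qed.

Lemma min_cond_left_inertial : min_cond (fun _ : A => True) -> nonzero_map phi -> left_inertial phi.
Proof.
move=> minA /padic_mult_valuation [v [K [u0 [lt_vK def_aK Ndvd]]]] X sX.
have fin_p (Y : A -> Prop) : subgroup Y -> (forall y, Y y -> True) -> fin_quot Y (mulng p Y).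
  by move=> sY _; apply: (fin_quot_mulng_of_min_cond p_prime minA sY (fun y _ => I)).
apply: fin_quot_mono (fin_quot_mulng_expn fin_p sX (fun _ _ => I) v) => _ [x [Xx ->]].
split; first exact: subgroupMn.
by have [y [Xy phi_y]] := padic_mult_onto_mulrn lt_vK def_aK Ndvd sX Xx; exists y.
Qed.

End PGroup.
End PadicMultiplication.

Section TorsionFreeRank.
Variable A : zmodType.

Lemma periodic_finite_tf_rank : periodic A -> finite_tf_rank A.
Proof.
move=> A_periodic; exists 0%N => s Is; rewrite leqn0; apply/negP => /negP s_neq0.
have s_gt0 : (0 < size s)%N by rewrite lt0n.
have [k k_gt0 s0k] := A_periodic s`_0.
move/lin_indepP: Is => /(_ (fun j => if j == 0%N then k%:Z else 0)).
rewrite lincomb_delta // -pmulrn s0k => /(_ erefl 0%N s_gt0) /= [k0].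
by rewrite k0 in k_gt0.
Qed.

Lemma infinite_tf_rankN : infinite_tf_rank A -> ~ finite_tf_rank A.
Proof.
move=> infA [r rank_r]; have [s [Is size_s]] := infA r.+1.
by move: (rank_r s Is); rewrite size_s ltnn.
Qed.

End TorsionFreeRank.

Section Inertial.
Variables (A : zmodType) (phi : A -> A).
Hypothesis phi_endo : endo phi.

Lemma inertial_of_stable : (forall X x, subgroup X -> X x -> X (phi x)) -> inertial phi.
Proof.
move=> stable X sX; apply: fin_quot_subset.
  exists 0, 0; rewrite addr0; split; last by split=> //; apply: subgroup0.
  by exists 0; rewrite endo0 //; split=> //; apply: subgroup0.
move=> _ [_ [x2 [[x1 [Xx1 ->]] [Xx2 ->]]]].
by apply: subgroupD => //; apply: stable.
Qed.

Lemma left_inertial_nonzero : infinite_group A -> left_inertial phi -> nonzero_map phi.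
Proof.
move=> infA phi_li; apply: NNPP => Nnz.
have phi0 x : phi x = 0 by apply: NNPP => phix; apply: Nnz; exists x; apply/eqP.
have [s [_ cover]] := phi_li _ (@subgroupT A).
apply: infA; exists s => x; have [y ys [_ [w [_ def_w]]]] := cover x I.
by move: def_w; rewrite phi0 => /eqP; rewrite subr_eq0 => /eqP ->.
Qed.

End Inertial.

Section RationalMultiplication.
Variables (A : zmodType) (phi : A -> A) (m n : int).
Hypothesis phi_rat : rat_mult m n phi.

Lemma rat_mult_torsionfree (x : A) : x *+ `|n| = 0 -> x = 0.
Proof.
case: phi_rat => n_neq0 _ _ pi_n0 _ xn; apply: pi_n0.
by exists `|n|%N; split=> //; rewrite absz_gt0.
Qed.

Lemma rat_mult_divisible_nat (x : A) : exists y, y *+ `|n| = x.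
Proof.
case: phi_rat => n_neq0 _ p_div _ _.
suff div_d d : (0 < d)%N -> (d %| `|n|)%N -> forall x : A, exists y, y *+ d = x.
  by apply: div_d; rewrite ?absz_gt0.
move: d; apply: nat_pdiv_ind => [_ {}x|p d p_prime _ IHd pd_dvd {}x]; first by exists x.
have [y1 <-] := p_div _ p_prime (dvdn_trans (dvdn_mulr d (dvdnn p)) pd_dvd) x.
have [y2 <-] := IHd (dvdn_trans (dvdn_mull p (dvdnn d)) pd_dvd) y1.
by exists y2; rewrite mulnC mulrnA.
Qed.

Lemma rat_mult_divisible (x : A) : exists y, y *~ n = x.
Proof.
have [y <-] := rat_mult_divisible_nat x.
by case: (mulrn_absz y n) => ->; [exists y|exists (- y); rewrite mulNrz].
Qed.

Lemma rat_mult_neq0 : nonzero_map phi -> m != 0.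
Proof.
case=> x; apply: contraNneq => m0; have [y <-] := rat_mult_divisible x.
by case: phi_rat => _ _ _ _ ->; rewrite m0 mulr0z.
Qed.

Lemma rat_mult_int : `|n|%N = 1%N -> int_mult phi.
Proof.
move=> n1; have [_ _ _ _ phi_n] := phi_rat.
have nn1 : n * n = 1.
  by move: n1; case: n => [[|[|k]]|[|k]] //= _; rewrite NegzE mulrNN mulr1.
by exists (n * m) => x; rewrite -{1}(mulr1z x) -nn1 mulrzA phi_n -mulrzA.
Qed.

Lemma rat_multNN : rat_mult (- m) (- n) phi.
Proof.
case: phi_rat => n_neq0 cop_mn p_div pi_n0 phi_n; split.
- by rewrite oppr_eq0.
- by rewrite coprimezN coprimez_sym coprimezN coprimez_sym.
- by move=> p p_prime; rewrite abszN; apply: p_div.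
- by move=> x [k [k_gt0 pi_k xk]]; apply: pi_n0; exists k; split=> // p /pi_k; rewrite abszN.
- by move=> x; rewrite !mulrNz -mulNrz phi_n mulNrz.
Qed.

Lemma fin_quot_rat_mult : finite_tf_rank A ->
  forall X : A -> Prop, subgroup X -> fin_quot X (mulng `|n| X).
Proof.
case: phi_rat => n_neq0 _ _ _ _ [r rank_r].
apply: fin_quot_mulng_of_primes; first by rewrite absz_gt0.
move=> p X p_prime p_dvd sX.
have no_ptors w : X w -> w *+ p = 0 -> w = 0.
  by move=> _ wp; apply: rat_mult_torsionfree; rewrite -(divnK p_dvd) mulnC mulrnA wp mul0rn.
apply: fin_quot_mono (fin_quot_finite_rank p_prime sX (@subgroup_trivial A) no_ptors rank_r).
by move=> _ [a [b [pXa [-> ->]]]]; rewrite addr0.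
Qed.

Hypothesis phi_endo : endo phi.

(* [phi X + X] lies in [{y | |n| y \in X}], which is finite over [X] because
   [y |-> |n| y] is injective and [X / |n| X] is finite. *)
Lemma rat_mult_inertial : finite_tf_rank A -> inertial phi.
Proof.
move=> rankA X sX; case: phi_rat => _ cop_mn _ _ phi_n.
have [G [GX coverX]] := fin_quot_rat_mult rankA sX.
have [root def_root] := ClassicalEpsilon.choice _ rat_mult_divisible_nat.
have [[a b] /= ab1] := coprimezP _ _ cop_mn.
have in_sum h : X (h *+ `|n|) -> sumg (imageg phi X) X h.
  move=> Xhn; have Xh_n : X (h *~ n) by apply/subgroupMz_absz.
  exists (phi ((h *~ n) *~ a)), ((h *~ n) *~ b).
  split; first by exists ((h *~ n) *~ a); split=> //; apply: subgroupMz.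
  split; first exact: subgroupMz.
  by rewrite (endoMz phi_endo) phi_n -!mulrzA -mulrzDr [m * a]mulrC [n * b]mulrC ab1 mulr1z.
exists (map root G); split=> [_ /mapP [g gG ->]|_ [_ [x2 [[x1 [Xx1 ->]] [Xx2 ->]]]]].
  by apply: in_sum; rewrite def_root; apply: GX.
have Xsum : X ((phi x1 + x2) *+ `|n|).
  apply/(subgroupMz_absz _ _ sX); rewrite mulrzDl -(endoMz phi_endo) phi_n.
  by apply: subgroupD => //; apply: subgroupMz.
have [g gG [x' [Xx' def_x']]] := coverX _ Xsum.
exists (root g); first exact: map_f.
have : (phi x1 + x2 - root g - x') *+ `|n| = 0 by rewrite !mulrnBl def_root -def_x' subrr.
by move/rat_mult_torsionfree/eqP; rewrite subr_eq0 => /eqP ->.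
Qed.

(* Pigeonhole: some [phi (x i - x j)] lies in the span of the independent family [x],
   which forces [n | m]. *)
Lemma inertial_rat_mult_dvd : ~ finite_tf_rank A -> inertial phi -> (n %| m)%Z.
Proof.
move=> Nrank phi_in; have [x Ix] := infinite_lin_indep_fun Nrank.
have sS := subgroup_zspan_inf x.
have phi_x_in i : sumg (imageg phi (zspan_inf x)) (zspan_inf x) (phi (x i)).
  exists (phi (x i)), 0; rewrite addr0; split; last by split=> //; apply: subgroup0.
  by exists (x i); split=> //; apply: zspan_inf_mem.
have [i [j [neq_ij Sij]]] := fin_quot_pigeonhole sS (phi_in _ sS) phi_x_in.
apply: (lin_indep_fun_dvd Ix neq_ij Sij).
by case: phi_rat => _ _ _ _ phi_n; rewrite -(endoB phi_endo) -(endoMz phi_endo) phi_n.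
Qed.

Lemma left_inertial_rat_mult_dvd : ~ finite_tf_rank A -> left_inertial phi -> (m %| n)%Z.
Proof.
move=> Nrank phi_li; have [x Ix] := infinite_lin_indep_fun Nrank.
have sS := subgroup_zspan_inf x.
have sW := subgroup_capg sS (subgroup_imageg phi_endo sS).
have [i [j [neq_ij [_ [y [Sy def_ij]]]]]] :=
  fin_quot_pigeonhole (w := x) sW (phi_li _ sS) (zspan_inf_mem x).
apply: (lin_indep_fun_dvd Ix neq_ij Sy).
by case: phi_rat => _ _ _ _ phi_n; rewrite def_ij -(endoMz phi_endo) phi_n.
Qed.

End RationalMultiplication.

Section PiComponent.
Variables (A : zmodType) (m : int).

Lemma subgroup_pi_component : subgroup (@pi_component A m).
Proof.
split; first by exists 1%N; split=> // p p_prime; rewrite dvdn1 => /eqP p1; rewrite p1 in p_prime.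
move=> x y [k1 [k1_gt0 pi_k1 xk1]] [k2 [k2_gt0 pi_k2 yk2]]; exists (k1 * k2)%N; split.
- by rewrite muln_gt0 k1_gt0.
- by move=> p p_prime; rewrite Euclid_dvdM // => /orP [/pi_k1|/pi_k2]; apply.
- by rewrite mulrnBl mulrnA xk1 mulnC mulrnA yk2 !mul0rn subrr.
Qed.

Lemma pi_component_primary (x : A) : pi_component m x -> exists e, x *+ `|m| ^ e = 0.
Proof.
move=> [k [k_gt0 pi_k xk]]; exists k.
by have /dvdnP [c ->] := dvdn_expn_of_primes k_gt0 pi_k; rewrite mulnC mulrnA xk mul0rn.
Qed.

(* [Y / (pY + Y_p)] is finite by finite rank, and [Y_p / pY_p] by the minimal condition. *)
Lemma fin_quot_mulng_min_pi (p : nat) : prime p -> (p %| `|m|)%N -> finite_tf_rank A ->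
  min_cond (@pi_component A m) -> forall Y : A -> Prop, subgroup Y -> fin_quot Y (mulng p Y).
Proof.
move=> p_prime p_dvd [r rank_r] min_pi Y sY.
pose T x := Y x /\ exists k, x *+ p ^ k = 0.
have sT : subgroup T.
  split=> [|x y [Yx [k1 xk1]] [Yy [k2 yk2]]].
    by split; [apply: subgroup0|exists 0%N; rewrite mul0rn].
  split; first exact: subgroupB.
  by exists (k1 + k2)%N; rewrite mulrnBl expnD mulrnA xk1 mul0rn mulnC mulrnA yk2 mul0rn subrr.
have TY x : T x -> Y x by case.
have T_pure w : Y w -> T (w *+ p) -> T w.
  by move=> Yw [_ [k wpk]]; split=> //; exists k.+1; rewrite expnS mulrnA.
have T_pi x : T x -> pi_component m x.
  move=> [_ [k xk]]; exists (p ^ k)%N; split=> //; first by rewrite expn_gt0 prime_gt0.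
  by move=> q q_prime; rewrite Euclid_dvdX // dvdn_prime2 // => /andP [/eqP ->].
have [G [GT coverT]] := fin_quot_mulng_of_min_cond p_prime min_pi sT T_pi.
apply: fin_quot_trans (fin_quot_finite_rank p_prime sY sT T_pure rank_r) _ => //.
  move=> _ [a [b [pYa [Tb ->]]]].
  by apply: subgroupD => //; [apply: mulng_subset pYa|apply: TY].
exists G; split=> [g gG|_ [a [t [pYa [Tt ->]]]]].
  exists 0, g; rewrite add0r; split; first by apply: subgroup0; apply: subgroup_mulng.
  by split=> //; apply: GT.
have [g gG [t' [Tt' def_t']]] := coverT t Tt.
exists g => //; rewrite -addrA def_t'; apply: subgroupD => //; first exact: subgroup_mulng.
by exists t'; split=> //; apply: TY.
Qed.

End PiComponent.

Section RationalLeftInertial.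
Variables (A : zmodType) (phi : A -> A) (m n : int).
Hypotheses (phi_endo : endo phi) (phi_rat : rat_mult m n phi).

(* On [A_pi(m)] multiplication by [n] is invertible, so there [phi] is [m] times an
   endomorphism. *)
Lemma rat_mult_pi_component_mulng (X : A -> Prop) x : subgroup X ->
  (forall y, X y -> pi_component m y) -> X x -> mulng `|m| X (phi x).
Proof.
move=> sX X_pi Xx; case: phi_rat => _ cop_mn _ _ phi_n.
have [k [k_gt0 pi_k xk]] := X_pi x Xx.
have /coprimezP [[u v] /= uv1] : coprimez k%:Z n by rewrite coprimezE (coprime_of_pi cop_mn).
have -> : x = (x *~ v) *~ n.
  by rewrite -mulrzA -[in LHS](mulr1z x) -uv1 mulrzDr mulrzMn_eq0 // add0r.
by rewrite phi_n; apply: mulng_absz => //; apply: subgroupMz.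
Qed.

Lemma left_inertial_rat_min_cond : left_inertial phi -> nonzero_map phi ->
  min_cond (@pi_component A m).
Proof.
move=> phi_li /(rat_mult_neq0 phi_rat) m_neq0.
apply: (min_cond_of_fin_quot_mulng (q := `|m|) (subgroup_pi_component A m)).
  by move=> x; apply: pi_component_primary.
move=> X sX X_pi; apply: fin_quot_mono (phi_li X sX) => _ [_ [x [Xx ->]]].
exact: rat_mult_pi_component_mulng.
Qed.

Lemma min_cond_rat_left_inertial : finite_tf_rank A -> min_cond (@pi_component A m) ->
  nonzero_map phi -> left_inertial phi.
Proof.
move=> rankA min_pi /(rat_mult_neq0 phi_rat) m_neq0 X sX.
apply: (fin_quot_mono (X := mulng `|m| X)) => [_ [x [Xx ->]]|].
  split; first exact: subgroupMn.
  case: phi_rat => _ _ _ _ phi_n; case: (mulrn_absz x m) => ->.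
    by exists (x *~ n); rewrite phi_n; split=> //; apply: subgroupMz.
  exists (- (x *~ n)); rewrite endoN // phi_n; split=> //.
  by apply: subgroupN => //; apply: subgroupMz.
apply: fin_quot_mulng_of_primes => //; first by rewrite absz_gt0.
by move=> p Y p_prime p_dvd sY; apply: (fin_quot_mulng_min_pi p_prime p_dvd rankA min_pi sY).
Qed.

End RationalLeftInertial.

Lemma rat_mult_left_inertial_unit (A : zmodType) (phi : A -> A) (n : int) :
  rat_mult 1 n phi -> left_inertial phi.
Proof.
case=> _ _ _ _ phi_n X sX; apply: fin_quot_subset => [|x Xx]; first exact: subgroup0.
by split=> //; exists (x *~ n); rewrite phi_n mulr1z; split=> //; apply: subgroupMz.
Qed.

Lemma rat_mult_abs1 (A : zmodType) (phi : A -> A) (m n : int) :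
  rat_mult m n phi -> `|m|%N = 1%N -> exists n' : int, n' != 0 /\ rat_mult 1 n' phi.
Proof.
move=> phi_rat m1; have n_neq0 : n != 0 by case: phi_rat.
have [m_eq1|m_eqN1] : m = 1 \/ m = -1.
  by move: m1 {phi_rat}; case: m => [[|[|k]]|[|k]] //= _; [left|right].
  by exists n; rewrite -m_eq1.
by exists (- n); rewrite oppr_eq0 -[1]opprK -m_eqN1; split=> //; apply: rat_multNN.
Qed.

Section MultiplicationTheorems.
Variables (A : zmodType) (phi : A -> A).
Hypothesis phi_mult : multiplication phi.

Lemma inertial_multiplicationP : inertial phi <-> finite_tf_rank A \/ int_mult phi.
Proof.
case: phi_mult => phi_endo [mult_per mult_nonper]; split=> [phi_in|[rankA|[z phi_z]]].
- have [rankA|Nrank] := classic (finite_tf_rank A); [by left|right].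
  have [m [n phi_rat]] := mult_nonper (fun Aper => Nrank (periodic_finite_tf_rank Aper)).
  apply: (rat_mult_int phi_rat); have [_ cop_mn _ _ _] := phi_rat.
  exact: coprimez_dvd_abs1 cop_mn (inertial_rat_mult_dvd phi_rat phi_endo Nrank phi_in).
- have [Aper|Nper] := classic (periodic A); last first.
    by have [m [n phi_rat]] := mult_nonper Nper; apply: rat_mult_inertial phi_rat phi_endo rankA.
  have [_ [alpha [_ phi_alpha]]] := mult_per Aper.
  apply: inertial_of_stable => // X x sX Xx; have [k k_gt0 xk] := Aper x.
  by have [c ->] := padic_mult_torsion phi_endo phi_alpha k_gt0 xk; apply: subgroupMz.
- by apply: inertial_of_stable => // X x sX Xx; rewrite phi_z; apply: subgroupMz.
Qed.

Lemma left_inertial_pgroupP p : infinite_group A -> prime p -> p_group A p ->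
  left_inertial phi <-> bijective phi \/ (min_cond (fun _ : A => True) /\ nonzero_map phi).
Proof.
move=> infA p_prime A_pgroup; case: phi_mult => phi_endo [mult_per _].
have Aper : periodic A.
  by move=> x; have [k xk] := A_pgroup x; exists (p ^ k)%N; rewrite ?expn_gt0 ?prime_gt0.
have [_ [alpha [alpha_compat phi_alpha]]] := mult_per Aper.
split=> [phi_li|[phi_bij|[minA phi_nz]]].
- have [dvd_a1|Ndvd] := boolP (p%:Z %| alpha p 1%N)%Z; last first.
    by left; have := padic_unit_bijective phi_endo alpha_compat phi_alpha p_prime A_pgroup Ndvd.
  right; split; last exact: left_inertial_nonzero infA phi_li.
  by have := left_inertial_min_cond alpha_compat phi_alpha p_prime A_pgroup phi_li dvd_a1.
- have := bijective_padic_unit phi_endo phi_alpha p_prime A_pgroup infA phi_bij.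
  by move/(padic_unit_left_inertial alpha_compat phi_alpha p_prime A_pgroup).
- by have := min_cond_left_inertial alpha_compat phi_alpha p_prime A_pgroup minA phi_nz.
Qed.

Lemma left_inertial_infinite_rankP : infinite_tf_rank A ->
  left_inertial phi <-> exists n : int, n != 0 /\ rat_mult 1 n phi.
Proof.
move=> /infinite_tf_rankN Nrank; case: phi_mult => phi_endo [_ mult_nonper].
split=> [phi_li|[n [_ phi_rat]]]; last exact: rat_mult_left_inertial_unit phi_rat.
have [m [n phi_rat]] := mult_nonper (fun Aper => Nrank (periodic_finite_tf_rank Aper)).
apply: (rat_mult_abs1 phi_rat); have [_ cop_mn _ _ _] := phi_rat.
rewrite coprimez_sym in cop_mn.
exact: coprimez_dvd_abs1 cop_mn (left_inertial_rat_mult_dvd phi_rat phi_endo Nrank phi_li).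
Qed.

End MultiplicationTheorems.

Theorem proposition2p1 (A : zmodType) (phi : A -> A) :
  infinite_group A -> multiplication phi ->
  (* (R) *)
  (inertial phi <-> (finite_tf_rank A \/ int_mult phi)) /\
  (* (L1) *)
  (forall p : nat, prime p -> p_group A p ->
     (left_inertial phi <->
        (bijective phi \/ (min_cond (fun _ : A => True) /\ nonzero_map phi)))) /\
  (* (L2) *)
  (forall m n : int, ~ periodic A -> finite_tf_rank A -> rat_mult m n phi ->
     (left_inertial phi <-> (min_cond (@pi_component A m) /\ nonzero_map phi))) /\
  (* (L3) *)
  (infinite_tf_rank A ->
     (left_inertial phi <-> exists n : int, n != 0%R /\ rat_mult 1%R n phi)).
Proof.
move=> infA phi_mult; have [phi_endo _] := phi_mult.
split; first exact: inertial_multiplicationP.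
split; first by move=> p; apply: left_inertial_pgroupP.
split; last exact: left_inertial_infinite_rankP.
move=> m n _ rankA phi_rat; split=> [phi_li|[min_pi phi_nz]].
  have phi_nz := left_inertial_nonzero infA phi_li.
  by split=> //; have := left_inertial_rat_min_cond phi_rat phi_li phi_nz.
by have := min_cond_rat_left_inertial phi_endo phi_rat rankA min_pi phi_nz.
Qed.
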